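(* Let $\mathbf t:\mathcal D\to\mathcal T$ be a logical refinement system with enough residuals and pullbacks, and let $W$ be a monoid in $\mathcal T$ with multiplication $p:W\otimes W\to W$. Then the functor $Q\mapsto Q^{+}$ from the fiber $\mathcal D_W$ to $[(W^{+})^{op},\mathbf{Set}]$ preserves residuals: for all $P,Q,R\sqsubset W$ there are natural isomorphisms of presheaves on $W^{+}$ $(P\multimap_WR)^{+}\cong P^{+}\multimap_{W^{+}}R^{+}$ and $(R\mathbin{\circ\!\!-}_WQ)^{+}\cong R^{+}\mathbin{\circ\!\!-}_{W^{+}}Q^{+}$.
   Context: A refinement system is a functor $\mathbf{t}:\mathcal{D}\to\mathcal{T}$; composition is diagrammatic. Write $P\sqsubset A$ if $\mathbf t(P)=A$; a derivation of $P\Rightarrow_cQ$ is a morphism $\alpha:P\to Q$ with $\mathbf t(\alpha)=c$. A pullback of $Q\sqsubset B$ along $c:A\to B$ is $c^*Q\sqsubset A$ with a derivation $\lambda$ of $c^*Q\Rightarrow_cQ$ such that post-composition with $\lambda$ is a bijection from derivations of $P\Rightarrow_dc^*Q$ to derivations of $P\Rightarrow_{d;c}Q$ for all $P\sqsubset X$, $d:X\to A$. A logical refinement system is a strict monoidal functor $\mathbf t$ between monoidal categories such that whenever a left residual $P\backslash R$ (right adjoint of $P\otimes-$ at $R$) or right residual $R/Q$ (right adjoint of $-\otimes Q$ at $R$) exists in $\mathcal D$, $\mathbf t$ maps it, with its evaluation map, to a corresponding residual in $\mathcal T$. ''Enough residuals and pullbacks'' means that the residuals $P\backslash R$, $R/Q$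 in $\mathcal D$ (for $P,Q,R\sqsubset W$), the residuals $W\backslash W$, $W/W$ in $\mathcal T$, and the pullbacks below exist. Let $\lambda p:W\to W\backslash W$ and $\rho p:W\to W/W$ be the left and right curryings of $p$. The fiber $\mathcal D_W$ (refinements of $W$, derivations over $\mathrm{id}_W$) has residuals $P\multimap_WR:=(\lambda p)^*(P\backslash R)$ and $R\mathbin{\circ\!\!-}_WQ:=(\rho p)^*(R/Q)$. Positive representation: $W^{+}$ has objects $(P,c)$, $P\sqsubset X$, $c:X\to W$, morphisms $(P_1,c_1)\to(P_2,c_2)$ the derivations of $P_1\Rightarrow_eP_2$ with $c_1=e;c_2$; for $Q\sqsubset W$, $Q^{+}:(W^{+})^{op}\to\mathbf{Set}$ sends $(P,c)$ to the set of derivations of $P\Rightarrow_cQ$, acting by precomposition. $W^{+}$ carries the functor $\otimes:W^{+}\times W^{+}\to W^{+}$, $((P_1,c_1),(P_2,c_2))\mapsto(P_1\otimes P_2,(c_1\otimes c_2);p)$. For presheaves $\phi,\psi,\omega$ on $W^{+}$: $(\phi\multimap_{W^{+}}\omega)(y)$ is the set of natural transformations $\phi\Rightarrow\omega((-)\otimes y)$, and $(\omega\mathbin{\circ\!\!-}_{W^{+}}\psi)(x)$ is the set of natural transformations $\psi\Rightarrow\omega(x\otimes(-))$. *)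

From Stdlib Require Import ProofIrrelevance FunctionalExtensionality.

Set Implicit Arguments.
Unset Strict Implicit.

(** * Categories (composition written diagrammatically: [comp f g] = f;g) *)
Record Cat : Type := {
  Ob :> Type;
  Hom : Ob -> Ob -> Type;
  idm : forall a, Hom a a;
  comp : forall a b c, Hom a b -> Hom b c -> Hom a c;
  comp_idl : forall a b (f : Hom a b), comp (idm a) f = f;
  comp_idr : forall a b (f : Hom a b), comp f (idm b) = f;
  comp_assoc : forall a b c d (f : Hom a b) (g : Hom b c) (h : Hom c d),
      comp (comp f g) h = comp f (comp g h)
}.
Arguments Hom {_} _ _.
Arguments idm {_} _.
Arguments comp {_ _ _ _} _ _.
Arguments comp_idl {_ _ _} _.
Arguments comp_idr {_ _ _} _.
Arguments comp_assoc {_ _ _ _ _} _ _ _.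

Definition cast {C : Cat} {a a' b b' : C} (e1 : a = a') (e2 : b = b')
  (f : Hom a b) : Hom a' b' :=
  match e1 in _ = x, e2 in _ = y return Hom x y with eq_refl, eq_refl => f end.

Lemma cast_comp {C : Cat} {a a' b b' c c' : C} (e1 : a = a') (e2 : b = b')
  (e3 : c = c') (f : Hom a b) (g : Hom b c) :
  comp (cast e1 e2 f) (cast e2 e3 g) = cast e1 e3 (comp f g).
Proof. destruct e1, e2, e3; reflexivity. Qed.

Lemma cast_sym {C : Cat} {a a' b b' : C} (e1 : a = a') (e2 : b = b')
  (f : Hom a b) (g : Hom a' b') :
  cast e1 e2 f = g -> f = cast (eq_sym e1) (eq_sym e2) g.
Proof. destruct e1, e2; simpl; auto. Qed.

Lemma cast_r_comp {C : Cat} {a b c c' : C} (e : c = c') (f : Hom a b)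
  (g : Hom b c) : cast eq_refl e (comp f g) = comp f (cast eq_refl e g).
Proof. destruct e; reflexivity. Qed.

Record MonStruct : Type := {
  mcat :> Cat;
  tens : mcat -> mcat -> mcat;
  tensH : forall a b c d : mcat, Hom a b -> Hom c d -> Hom (tens a c) (tens b d);
  munit : mcat;
  assoc : forall a b c : mcat, Hom (tens (tens a b) c) (tens a (tens b c));
  assoc_inv : forall a b c : mcat, Hom (tens a (tens b c)) (tens (tens a b) c);
  lunit : forall a : mcat, Hom (tens munit a) a;
  lunit_inv : forall a : mcat, Hom a (tens munit a);
  runit : forall a : mcat, Hom (tens a munit) a;
  runit_inv : forall a : mcat, Hom a (tens a munit)
}.
Arguments tens {_} _ _.
Arguments tensH {_ _ _ _ _} _ _.
Arguments munit : clear implicits.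
Arguments assoc {_} _ _ _.
Arguments assoc_inv {_} _ _ _.
Arguments lunit {_} _.
Arguments lunit_inv {_} _.
Arguments runit {_} _.
Arguments runit_inv {_} _.

Record MonLaws (M : MonStruct) : Prop := {
  ml_tens_id : forall a c : M, tensH (idm a) (idm c) = idm (tens a c);
  ml_tens_comp : forall (a b e c d f : M) (x : Hom a b) (y : Hom b e)
      (z : Hom c d) (w : Hom d f),
      tensH (comp x y) (comp z w) = comp (tensH x z) (tensH y w);
  ml_assoc_iso : forall a b c : M,
      comp (assoc a b c) (assoc_inv a b c) = idm _ /\
      comp (assoc_inv a b c) (assoc a b c) = idm _;
  ml_assoc_nat : forall (a a' b b' c c' : M) (f : Hom a a') (g : Hom b b')
      (h : Hom c c'),
      comp (tensH (tensH f g) h) (assoc a' b' c') =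
      comp (assoc a b c) (tensH f (tensH g h));
  ml_lunit_iso : forall a : M,
      comp (lunit a) (lunit_inv a) = idm _ /\ comp (lunit_inv a) (lunit a) = idm _;
  ml_lunit_nat : forall (a b : M) (f : Hom a b),
      comp (tensH (idm (munit M)) f) (lunit b) = comp (lunit a) f;
  ml_runit_iso : forall a : M,
      comp (runit a) (runit_inv a) = idm _ /\ comp (runit_inv a) (runit a) = idm _;
  ml_runit_nat : forall (a b : M) (f : Hom a b),
      comp (tensH f (idm (munit M))) (runit b) = comp (runit a) f;
  ml_pentagon : forall a b c d : M,
      comp (comp (tensH (assoc a b c) (idm d)) (assoc a (tens b c) d))
           (tensH (idm a) (assoc b c d)) =
      comp (assoc (tens a b) c d) (assoc a b (tens c d));
  ml_triangle : forall a b : M,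
      comp (assoc a (munit M) b) (tensH (idm a) (lunit b)) =
      tensH (runit a) (idm b)
}.

Record MonCat : Type := { mstr :> MonStruct; mlaws : MonLaws mstr }.

Lemma tens_comp_law (M : MonCat) (a b e c d f : M) (x : Hom a b) (y : Hom b e)
      (z : Hom c d) (w : Hom d f) :
  tensH (comp x y) (comp z w) = comp (tensH x z) (tensH y w).
Proof. exact (ml_tens_comp (mlaws M) x y z w). Qed.

Lemma tens_id_law (M : MonCat) (a c : M) : tensH (idm a) (idm c) = idm (tens a c).
Proof. exact (ml_tens_id (mlaws M) a c). Qed.

Definition is_monoid (T : MonCat) (W : T) (p : Hom (tens W W) W)
  (e : Hom (munit T) W) : Prop :=
  comp (tensH p (idm W)) p = comp (assoc W W W) (comp (tensH (idm W) p) p) /\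
  comp (tensH e (idm W)) p = lunit W /\
  comp (tensH (idm W) e) p = runit W.

(** left residual [P\R] (right adjoint of [P (x) -] at [R]) with evaluation,
    right residual [R/Q] (right adjoint of [- (x) Q] at [R]) with evaluation *)
Definition is_lres (M : MonCat) (P R L : M) (ev : Hom (tens P L) R) : Prop :=
  forall (X : M) (f : Hom (tens P X) R),
    exists! g : Hom X L, comp (tensH (idm P) g) ev = f.

Definition is_rres (M : MonCat) (Q R L : M) (ev : Hom (tens L Q) R) : Prop :=
  forall (X : M) (f : Hom (tens X Q) R),
    exists! g : Hom X L, comp (tensH g (idm Q)) ev = f.
Arguments is_lres {M} P R L ev.
Arguments is_rres {M} Q R L ev.

Record Functor (C E : Cat) : Type := {
  fob : C -> E;
  fmap : forall a b : C, Hom a b -> Hom (fob a) (fob b);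
  fmap_id : forall a, fmap (idm a) = idm (fob a);
  fmap_comp : forall a b c (f : Hom a b) (g : Hom b c),
      fmap (comp f g) = comp (fmap f) (fmap g)
}.
Arguments fob {_ _} _ _.
Arguments fmap {_ _} _ {_ _} _.

Record StrictMonFunctor (D T : MonCat) : Type := {
  smf :> Functor D T;
  fob_tens : forall a b : D, fob smf (tens a b) = tens (fob smf a) (fob smf b);
  fob_unit : fob smf (munit D) = munit T;
  fmap_tens : forall (a b c d : D) (f : Hom a b) (g : Hom c d),
      cast (fob_tens a c) (fob_tens b d) (fmap smf (tensH f g)) =
      tensH (fmap smf f) (fmap smf g);
  fmap_assoc : forall a b c : D,
      cast (eq_trans (fob_tens (tens a b) c)
                     (f_equal (fun z => tens z (fob smf c)) (fob_tens a b)))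
           (eq_trans (fob_tens a (tens b c))
                     (f_equal (tens (fob smf a)) (fob_tens b c)))
           (fmap smf (assoc a b c)) =
      assoc (fob smf a) (fob smf b) (fob smf c);
  fmap_lunit : forall a : D,
      cast (eq_trans (fob_tens (munit D) a)
                     (f_equal (fun z => tens z (fob smf a)) fob_unit))
           eq_refl (fmap smf (lunit a)) = lunit (fob smf a);
  fmap_runit : forall a : D,
      cast (eq_trans (fob_tens a (munit D))
                     (f_equal (tens (fob smf a)) fob_unit))
           eq_refl (fmap smf (runit a)) = runit (fob smf a)
}.
Arguments fob_tens {_ _} _ _ _.

(** A derivation of [P =>_c Q], where [P ⊏ X] (witnessed by [hP : t P = X])
    and [Q ⊏ Y]: a morphism [α : P -> Q] with [t α = c]. *)
Definition deriv {C E : Cat} (t : Functor C E) (P Q : C) {X Y : E}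
  (hP : fob t P = X) (hQ : fob t Q = Y) (c : Hom X Y) : Type :=
  { α : Hom P Q | cast hP hQ (fmap t α) = c }.
Arguments deriv {C E} t P Q {X Y} hP hQ c.

Definition is_pullback {C E : Cat} (t : Functor C E) {A B : E} (c : Hom A B)
  (Q : C) (hQ : fob t Q = B) (L : C) (hL : fob t L = A)
  (lam : deriv t L Q hL hQ c) : Prop :=
  forall (P : C) (X : E) (hP : fob t P = X) (d : Hom X A)
         (β : deriv t P Q hP hQ (comp d c)),
    exists! α : deriv t P L hP hL d,
      comp (proj1_sig α) (proj1_sig lam) = proj1_sig β.
Arguments is_pullback {C E} t {A B} c Q hQ L hL lam.

Definition logical {D T : MonCat} (t : StrictMonFunctor D T) : Prop :=
  (forall (P R L : D) (ev : Hom (tens P L) R), is_lres P R L ev ->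
     is_lres (fob t P) (fob t R) (fob t L)
             (cast (fob_tens t P L) eq_refl (fmap t ev))) /\
  (forall (Q R L : D) (ev : Hom (tens L Q) R), is_rres Q R L ev ->
     is_rres (fob t Q) (fob t R) (fob t L)
             (cast (fob_tens t L Q) eq_refl (fmap t ev))).

(** The image under t of the evaluation of a residual [P\R] with [P, R ⊏ W],
    viewed as the evaluation [W (x) t(P\R) -> W] of a residual of [W, W] in T. *)
Definition lres_ev_T {D T : MonCat} (t : StrictMonFunctor D T) {W : T}
  {P R L : D} (hP : fob t P = W) (hR : fob t R = W) (ev : Hom (tens P L) R) :
  Hom (tens W (fob t L)) W :=
  cast (eq_trans (fob_tens t P L) (f_equal (fun z => tens z (fob t L)) hP))
       hR (fmap t ev).

Definition rres_ev_T {D T : MonCat} (t : StrictMonFunctor D T) {W : T}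
  {Q R L : D} (hQ : fob t Q = W) (hR : fob t R = W) (ev : Hom (tens L Q) R) :
  Hom (tens (fob t L) W) W :=
  cast (eq_trans (fob_tens t L Q) (f_equal (tens (fob t L)) hQ))
       hR (fmap t ev).

Definition enough_res_pb {D T : MonCat} (t : StrictMonFunctor D T) (W : T)
  (p : Hom (tens W W) W) : Prop :=
  (forall P R : D, fob t P = W -> fob t R = W ->
     exists (L : D) (ev : Hom (tens P L) R), is_lres P R L ev) /\
  (forall Q R : D, fob t Q = W -> fob t R = W ->
     exists (L : D) (ev : Hom (tens L Q) R), is_rres Q R L ev) /\
  (exists (L : T) (ev : Hom (tens W L) W), is_lres W W L ev) /\
  (exists (L : T) (ev : Hom (tens L W) W), is_rres W W L ev) /\
  (forall (P R : D) (hP : fob t P = W) (hR : fob t R = W) (L : D)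
          (ev : Hom (tens P L) R), is_lres P R L ev ->
     forall lp : Hom W (fob t L), comp (tensH (idm W) lp) (lres_ev_T hP hR ev) = p ->
     exists (L' : D) (hL' : fob t L' = W) (lam : deriv t L' L hL' eq_refl lp),
       is_pullback t lp L eq_refl L' hL' lam) /\
  (forall (Q R : D) (hQ : fob t Q = W) (hR : fob t R = W) (L : D)
          (ev : Hom (tens L Q) R), is_rres Q R L ev ->
     forall rp : Hom W (fob t L), comp (tensH rp (idm W)) (rres_ev_T hQ hR ev) = p ->
     exists (L' : D) (hL' : fob t L' = W) (lam : deriv t L' L hL' eq_refl rp),
       is_pullback t rp L eq_refl L' hL' lam).

Lemma sig_eq {A : Type} {P : A -> Prop} (u v : sig P) :
  proj1_sig u = proj1_sig v -> u = v.
Proof.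
  destruct u as [u pu], v as [v pv]; simpl; intros ->.
  f_equal; apply proof_irrelevance.
Qed.

(** * The positive representation W^+ and presheaves on it *)
Section Plus.
Variables (D T : MonCat) (t : StrictMonFunctor D T) (W : T).

Definition WpOb : Type := { P : D & Hom (fob t P) W }.

Definition WpHom (x1 x2 : WpOb) : Type :=
  { α : Hom (projT1 x1) (projT1 x2) | projT2 x1 = comp (fmap t α) (projT2 x2) }.

Lemma WpHom_eq (x1 x2 : WpOb) (h h' : WpHom x1 x2) :
  proj1_sig h = proj1_sig h' -> h = h'.
Proof. apply sig_eq. Qed.

Definition Wp_id (x : WpOb) : WpHom x x.
Proof.
  exists (idm (projT1 x)). rewrite fmap_id, comp_idl. reflexivity.
Defined.

Definition Wp_comp (x'' x' x : WpOb) (h' : WpHom x'' x') (h : WpHom x' x) :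
  WpHom x'' x.
Proof.
  exists (comp (proj1_sig h') (proj1_sig h)).
  rewrite fmap_comp, comp_assoc, <- (proj2_sig h). exact (proj2_sig h').
Defined.

Variable p : Hom (tens W W) W.

Definition Wp_tens (x y : WpOb) : WpOb :=
  existT _ (tens (projT1 x) (projT1 y))
    (cast (eq_sym (fob_tens t (projT1 x) (projT1 y))) eq_refl
          (comp (tensH (projT2 x) (projT2 y)) p)).

Definition Wp_tensH (x1' x1 x2' x2 : WpOb) (h1 : WpHom x1' x1) (h2 : WpHom x2' x2) :
  WpHom (Wp_tens x1' x2') (Wp_tens x1 x2).
Proof.
  exists (tensH (proj1_sig h1) (proj1_sig h2)).
  destruct h1 as [a1 e1], h2 as [a2 e2].
  destruct x1' as [P1' c1'], x1 as [P1 c1], x2' as [P2' c2'], x2 as [P2 c2].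
  simpl in *.
  rewrite (cast_sym (fmap_tens t a1 a2)), cast_comp.
  f_equal. rewrite <- comp_assoc, <- tens_comp_law, <- e1, <- e2. reflexivity.
Defined.

Record Psh : Type := {
  psh :> WpOb -> Type;
  pact : forall x' x : WpOb, WpHom x' x -> psh x -> psh x';
  pact_id : forall x (a : psh x), pact (Wp_id x) a = a;
  pact_comp : forall x'' x' x (h' : WpHom x'' x') (h : WpHom x' x) (a : psh x),
      pact (Wp_comp h' h) a = pact h' (pact h a)
}.
Arguments pact _ {_ _} _ _.

Definition PshHom (F G : Psh) : Type :=
  { η : forall x, F x -> G x |
    forall x' x (h : WpHom x' x) (a : F x), η x' (pact F h a) = pact G h (η x a) }.

Definition psh_iso (F G : Psh) : Prop :=
  exists (φ : PshHom F G) (ψ : PshHom G F),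
    (forall x (a : F x), proj1_sig ψ x (proj1_sig φ x a) = a) /\
    (forall x (b : G x), proj1_sig φ x (proj1_sig ψ x b) = b).

Section QPlus.
Variables (Q : D) (hQ : fob t Q = W).

Definition Qplus_ob (x : WpOb) : Type := deriv t (projT1 x) Q eq_refl hQ (projT2 x).

Definition Qplus_act (x' x : WpOb) (h : WpHom x' x) (a : Qplus_ob x) : Qplus_ob x'.
Proof.
  exists (comp (proj1_sig h) (proj1_sig a)).
  rewrite fmap_comp, cast_r_comp, (proj2_sig a). symmetry. exact (proj2_sig h).
Defined.

Lemma Qplus_act_id x (a : Qplus_ob x) : Qplus_act (Wp_id x) a = a.
Proof. apply sig_eq; simpl; apply comp_idl. Qed.

Lemma Qplus_act_comp x'' x' x (h' : WpHom x'' x') (h : WpHom x' x) (a : Qplus_ob x) :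
  Qplus_act (Wp_comp h' h) a = Qplus_act h' (Qplus_act h a).
Proof. apply sig_eq; simpl; apply comp_assoc. Qed.

Definition Qplus : Psh := Build_Psh Qplus_act_id Qplus_act_comp.
End QPlus.

Lemma Wp_tensH_id x y : Wp_tensH (Wp_id x) (Wp_id y) = Wp_id (Wp_tens x y).
Proof. apply WpHom_eq; simpl; apply tens_id_law. Qed.

Lemma Wp_tensH_comp_r x y'' y' y (h' : WpHom y'' y') (h : WpHom y' y) :
  Wp_tensH (Wp_id x) (Wp_comp h' h) =
  Wp_comp (Wp_tensH (Wp_id x) h') (Wp_tensH (Wp_id x) h).
Proof.
  apply WpHom_eq; simpl. rewrite <- tens_comp_law, comp_idl. reflexivity.
Qed.

Lemma Wp_tensH_comp_l y x'' x' x (h' : WpHom x'' x') (h : WpHom x' x) :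
  Wp_tensH (Wp_comp h' h) (Wp_id y) =
  Wp_comp (Wp_tensH h' (Wp_id y)) (Wp_tensH h (Wp_id y)).
Proof.
  apply WpHom_eq; simpl. rewrite <- tens_comp_law, comp_idl. reflexivity.
Qed.

Lemma Wp_interchange x' x y' y (k : WpHom x' x) (h : WpHom y' y) :
  Wp_comp (Wp_tensH (Wp_id x') h) (Wp_tensH k (Wp_id y)) =
  Wp_comp (Wp_tensH k (Wp_id y')) (Wp_tensH (Wp_id x) h).
Proof.
  apply WpHom_eq; simpl. rewrite <- !tens_comp_law, !comp_idl, !comp_idr.
  reflexivity.
Qed.

(** left residual of presheaves:
    (φ ⊸ ω)(y) = natural transformations φ => ω((-) ⊗ y) *)
Section LRes.
Variables (F G : Psh).

Definition Lres_ob (y : WpOb) : Type :=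
  { θ : forall x, F x -> G (Wp_tens x y) |
    forall x' x (h : WpHom x' x) (a : F x),
      θ x' (pact F h a) = pact G (Wp_tensH h (Wp_id y)) (θ x a) }.

Definition Lres_act (y' y : WpOb) (h : WpHom y' y) (θ : Lres_ob y) : Lres_ob y'.
Proof.
  exists (fun x a => pact G (Wp_tensH (Wp_id x) h) (proj1_sig θ x a)).
  intros x' x k a. rewrite (proj2_sig θ), <- !pact_comp, Wp_interchange.
  reflexivity.
Defined.

Lemma Lres_act_id y (θ : Lres_ob y) : Lres_act (Wp_id y) θ = θ.
Proof.
  apply sig_eq; simpl. apply functional_extensionality_dep; intro x.
  apply functional_extensionality; intro a.
  rewrite Wp_tensH_id, pact_id. reflexivity.
Qed.

Lemma Lres_act_comp y'' y' y (h' : WpHom y'' y') (h : WpHom y' y) (θ : Lres_ob y) :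
  Lres_act (Wp_comp h' h) θ = Lres_act h' (Lres_act h θ).
Proof.
  apply sig_eq; simpl. apply functional_extensionality_dep; intro x.
  apply functional_extensionality; intro a.
  rewrite Wp_tensH_comp_r, pact_comp. reflexivity.
Qed.

Definition Lres : Psh := Build_Psh Lres_act_id Lres_act_comp.
End LRes.

(** right residual of presheaves:
    (ω ∘- ψ)(x) = natural transformations ψ => ω(x ⊗ (-)) ;
    here [F] plays ψ and [G] plays ω *)
Section RRes.
Variables (F G : Psh).

Definition Rres_ob (x : WpOb) : Type :=
  { θ : forall y, F y -> G (Wp_tens x y) |
    forall y' y (h : WpHom y' y) (a : F y),
      θ y' (pact F h a) = pact G (Wp_tensH (Wp_id x) h) (θ y a) }.

Definition Rres_act (x' x : WpOb) (k : WpHom x' x) (θ : Rres_ob x) : Rres_ob x'.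
Proof.
  exists (fun y a => pact G (Wp_tensH k (Wp_id y)) (proj1_sig θ y a)).
  intros y' y h a. rewrite (proj2_sig θ), <- !pact_comp, Wp_interchange.
  reflexivity.
Defined.

Lemma Rres_act_id x (θ : Rres_ob x) : Rres_act (Wp_id x) θ = θ.
Proof.
  apply sig_eq; simpl. apply functional_extensionality_dep; intro y.
  apply functional_extensionality; intro a.
  rewrite Wp_tensH_id, pact_id. reflexivity.
Qed.

Lemma Rres_act_comp x'' x' x (k' : WpHom x'' x') (k : WpHom x' x) (θ : Rres_ob x) :
  Rres_act (Wp_comp k' k) θ = Rres_act k' (Rres_act k θ).
Proof.
  apply sig_eq; simpl. apply functional_extensionality_dep; intro y.
  apply functional_extensionality; intro a.
  rewrite Wp_tensH_comp_l, pact_comp. reflexivity.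
Qed.

Definition Rres : Psh := Build_Psh Rres_act_id Rres_act_comp.
End RRes.

End Plus.

(* Write [y = (Y, c)].  Since [P ⊸_W R] is the pullback of [P\R] along the
   currying [λp], a derivation [Y ⇒_c P ⊸_W R] is the same as a derivation
   [Y ⇒_(c;λp) P\R].  Currying against [P\R] turns the latter into a
   derivation [P ⊗ Y ⇒ R] over [(id ⊗ c);p], i.e. an element of [R^+] at
   [(P, id) ⊗ y]; logicality of [t] guarantees that every such element
   uncurries to a derivation over [c;λp].  Finally [P^+] is represented by
   [(P, id)] with generic element [id_P], so by Yoneda a natural
   transformation [P^+ ⇒ R^+((-) ⊗ y)] is determined by its value on [id_P].
   The right residual is symmetric. *)
From Stdlib Require Import FunctionalExtensionality ClassicalEpsilon.

Set Implicit Arguments.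
Unset Strict Implicit.

Lemma lres_cancel (M : MonCat) (P R L : M) (ev : Hom (tens P L) R)
  (X : M) (g1 g2 : Hom X L) :
  is_lres P R L ev ->
  comp (tensH (idm P) g1) ev = comp (tensH (idm P) g2) ev -> g1 = g2.
Proof.
  intros Hres E.
  destruct (Hres X (comp (tensH (idm P) g1) ev)) as [g [_ Hg]].
  transitivity g; [symmetry|]; apply Hg; [reflexivity | now symmetry].
Qed.

Lemma rres_cancel (M : MonCat) (Q R L : M) (ev : Hom (tens L Q) R)
  (X : M) (g1 g2 : Hom X L) :
  is_rres Q R L ev ->
  comp (tensH g1 (idm Q)) ev = comp (tensH g2 (idm Q)) ev -> g1 = g2.
Proof.
  intros Hres E.
  destruct (Hres X (comp (tensH g1 (idm Q)) ev)) as [g [_ Hg]].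
  transitivity g; [symmetry|]; apply Hg; [reflexivity | now symmetry].
Qed.

Definition deriv_comp (C E : Cat) (t : Functor C E) (P Q R : C) (X Y Z : E)
  (hP : fob t P = X) (hQ : fob t Q = Y) (hR : fob t R = Z)
  (c : Hom X Y) (c' : Hom Y Z)
  (α : deriv t P Q hP hQ c) (β : deriv t Q R hQ hR c') :
  deriv t P R hP hR (comp c c').
Proof.
  exists (comp (proj1_sig α) (proj1_sig β)).
  rewrite fmap_comp, <- (cast_comp hP hQ hR), (proj2_sig α), (proj2_sig β).
  reflexivity.
Defined.

Lemma pullback_cancel (C E : Cat) (t : Functor C E) (A B : E) (c : Hom A B)
  (Q : C) (hQ : fob t Q = B) (L : C) (hL : fob t L = A)
  (lam : deriv t L Q hL hQ c) (P : C) (X : E) (hP : fob t P = X) (d : Hom X A)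
  (α1 α2 : deriv t P L hP hL d) :
  is_pullback t c Q hQ L hL lam ->
  comp (proj1_sig α1) (proj1_sig lam) = comp (proj1_sig α2) (proj1_sig lam) ->
  α1 = α2.
Proof.
  intros Hpb Heq.
  destruct (Hpb P X hP d (deriv_comp α1 lam)) as [α [_ Hα]].
  transitivity α; [symmetry|]; apply Hα; [reflexivity | now symmetry].
Qed.

Lemma psh_iso_of_bijective (D T : MonCat) (t : StrictMonFunctor D T) (W : T)
  (F G : Psh t W) (φ : PshHom F G) :
  (forall x a1 a2, proj1_sig φ x a1 = proj1_sig φ x a2 -> a1 = a2) ->
  (forall x b, exists a, proj1_sig φ x a = b) -> psh_iso F G.
Proof.
  intros Hinj Hsurj.
  set (ψ := fun x b =>
    proj1_sig (constructive_indefinite_description _ (Hsurj x b))).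
  assert (φψ : forall x b, proj1_sig φ x (ψ x b) = b).
  { intros x b; unfold ψ.
    destruct (constructive_indefinite_description _ _); assumption. }
  assert (ψ_nat : forall x' x (h : WpHom x' x) (b : G x),
             ψ x' (pact h b) = pact h (ψ x b)).
  { intros x' x h b; apply Hinj.
    rewrite φψ, (proj2_sig φ), φψ; reflexivity. }
  exists φ, (exist _ ψ ψ_nat); split; simpl.
  - intros x a; apply Hinj, φψ.
  - exact φψ.
Qed.

Section Representable.
Variables (D T : MonCat) (t : StrictMonFunctor D T) (W : T) (p : Hom (tens W W) W).
Variables (Q : D) (hQ : fob t Q = W).

Definition Qplus_rep_ob : WpOb t W := existT _ Q (cast eq_refl hQ (idm (fob t Q))).

Definition Qplus_rep_elem : Qplus_ob hQ Qplus_rep_ob.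
Proof. exists (idm Q); simpl; rewrite fmap_id; reflexivity. Defined.

Definition Qplus_classify (x : WpOb t W) (a : Qplus_ob hQ x) : WpHom x Qplus_rep_ob.
Proof.
  exists (proj1_sig a).
  change (projT2 x = comp (fmap t (proj1_sig a)) (cast eq_refl hQ (idm (fob t Q)))).
  rewrite <- cast_r_comp, comp_idr; symmetry; exact (proj2_sig a).
Defined.

Lemma Qplus_classifyK (x : WpOb t W) (a : Qplus_ob hQ x) :
  pact (p := Qplus hQ) (Qplus_classify a) Qplus_rep_elem = a.
Proof. apply sig_eq; simpl; apply comp_idr. Qed.

Lemma Lres_ob_eq_rep (G : Psh t W) (y : WpOb t W) (θ1 θ2 : Lres_ob p (Qplus hQ) G y) :
  proj1_sig θ1 _ Qplus_rep_elem = proj1_sig θ2 _ Qplus_rep_elem -> θ1 = θ2.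
Proof.
  intro E; apply sig_eq.
  apply functional_extensionality_dep; intro x.
  apply functional_extensionality; intro a.
  rewrite <- (Qplus_classifyK a), (proj2_sig θ1), (proj2_sig θ2), E.
  reflexivity.
Qed.

Lemma Rres_ob_eq_rep (G : Psh t W) (x : WpOb t W) (θ1 θ2 : Rres_ob p (Qplus hQ) G x) :
  proj1_sig θ1 _ Qplus_rep_elem = proj1_sig θ2 _ Qplus_rep_elem -> θ1 = θ2.
Proof.
  intro E; apply sig_eq.
  apply functional_extensionality_dep; intro y.
  apply functional_extensionality; intro a.
  rewrite <- (Qplus_classifyK a), (proj2_sig θ1), (proj2_sig θ2), E.
  reflexivity.
Qed.
End Representable.

(* With the strictness equations of [t] generalised to equations between
   variables (so that they can be eliminated), these state the identities
   [(d ⊗ c;λp);ev = (d ⊗ c);p] and [(id ⊗ c;λp);ev = b] in [T], and their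
   mirror images. *)
Lemma lres_eval_transport (T : MonCat) (W X Y P L R XY PL : T)
  (eXY : XY = tens X Y) (ePL : PL = tens P L) (hP : P = W) (hR : R = W)
  (f : Hom XY PL) (a : Hom X P) (α : Hom Y L) (ev : Hom PL R)
  (d : Hom X W) (c : Hom Y W) (lp : Hom W L) (p : Hom (tens W W) W) :
  cast eXY ePL f = tensH a α -> cast eq_refl hP a = d -> α = comp c lp ->
  comp (tensH (idm W) lp) (cast (eq_trans ePL (f_equal (fun z => tens z L) hP)) hR ev) = p ->
  cast eq_refl hR (comp f ev) = cast (eq_sym eXY) eq_refl (comp (tensH d c) p).
Proof.
  intros Hf Ha Hα Hp; subst; simpl in *; subst.
  rewrite <- comp_assoc, <- tens_comp_law, comp_idr; reflexivity.
Qed.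

Lemma lres_curry_transport (T : MonCat) (W P Y L R PY PL : T)
  (ePY : PY = tens P Y) (ePL : PL = tens P L) (hP : P = W) (hR : R = W)
  (b : Hom PY R) (ev : Hom PL R) (c : Hom Y W) (lp : Hom W L) (p : Hom (tens W W) W) :
  cast eq_refl hR b = cast (eq_sym ePY) eq_refl (comp (tensH (cast eq_refl hP (idm P)) c) p) ->
  comp (tensH (idm W) lp) (cast (eq_trans ePL (f_equal (fun z => tens z L) hP)) hR ev) = p ->
  comp (tensH (idm P) (comp c lp)) (cast ePL eq_refl ev) = cast ePY eq_refl b.
Proof.
  intros Hb Hp; subst; simpl in *; subst.
  rewrite <- comp_assoc, <- tens_comp_law, comp_idl; reflexivity.
Qed.

Lemma rres_eval_transport (T : MonCat) (W X Y Q L R XY LQ : T)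
  (eXY : XY = tens X Y) (eLQ : LQ = tens L Q) (hQ : Q = W) (hR : R = W)
  (f : Hom XY LQ) (α : Hom X L) (a : Hom Y Q) (ev : Hom LQ R)
  (c : Hom X W) (d : Hom Y W) (rp : Hom W L) (p : Hom (tens W W) W) :
  cast eXY eLQ f = tensH α a -> cast eq_refl hQ a = d -> α = comp c rp ->
  comp (tensH rp (idm W)) (cast (eq_trans eLQ (f_equal (tens L) hQ)) hR ev) = p ->
  cast eq_refl hR (comp f ev) = cast (eq_sym eXY) eq_refl (comp (tensH c d) p).
Proof.
  intros Hf Ha Hα Hp; subst; simpl in *; subst.
  rewrite <- comp_assoc, <- tens_comp_law, comp_idr; reflexivity.
Qed.

Lemma rres_curry_transport (T : MonCat) (W Q X L R XQ LQ : T)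
  (eXQ : XQ = tens X Q) (eLQ : LQ = tens L Q) (hQ : Q = W) (hR : R = W)
  (b : Hom XQ R) (ev : Hom LQ R) (c : Hom X W) (rp : Hom W L) (p : Hom (tens W W) W) :
  cast eq_refl hR b = cast (eq_sym eXQ) eq_refl (comp (tensH c (cast eq_refl hQ (idm Q))) p) ->
  comp (tensH rp (idm W)) (cast (eq_trans eLQ (f_equal (tens L) hQ)) hR ev) = p ->
  comp (tensH (comp c rp) (idm Q)) (cast eLQ eq_refl ev) = cast eXQ eq_refl b.
Proof.
  intros Hb Hp; subst; simpl in *; subst.
  rewrite <- comp_assoc, <- tens_comp_law, comp_idl; reflexivity.
Qed.

Section LeftResidual.
Variables (D T : MonCat) (t : StrictMonFunctor D T) (W : T) (p : Hom (tens W W) W).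
Variables (P R : D) (hP : fob t P = W) (hR : fob t R = W).
Variables (L : D) (ev : Hom (tens P L) R) (lp : Hom W (fob t L)).
Hypothesis L_lres : is_lres P R L ev.
Hypothesis lp_curries_p : comp (tensH (idm W) lp) (lres_ev_T hP hR ev) = p.
Variables (L' : D) (hL' : fob t L' = W) (lam : deriv t L' L hL' eq_refl lp).
Hypothesis L'_pullback : is_pullback t lp L eq_refl L' hL' lam.

Definition lres_transpose_at (y : WpOb t W) (β : Qplus_ob hL' y)
  (x : WpOb t W) (a : Qplus_ob hP x) : Qplus_ob hR (Wp_tens p x y).
Proof.
  exists (comp (tensH (proj1_sig a) (proj1_sig (deriv_comp β lam))) ev).
  rewrite fmap_comp; unfold Wp_tens; simpl.
  eapply lres_eval_transport.
  - apply fmap_tens.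
  - exact (proj2_sig a).
  - exact (proj2_sig (deriv_comp β lam)).
  - exact lp_curries_p.
Defined.

Definition lres_transpose (y : WpOb t W) (β : Qplus_ob hL' y) :
  Lres_ob p (Qplus hP) (Qplus hR) y.
Proof.
  exists (lres_transpose_at β).
  intros x' x h a; apply sig_eq; simpl.
  rewrite <- comp_assoc, <- tens_comp_law, comp_idl; reflexivity.
Defined.

Definition lres_transposeH : PshHom (Qplus hL') (Lres p (Qplus hP) (Qplus hR)).
Proof.
  exists lres_transpose.
  intros y' y h β; apply sig_eq; simpl.
  apply functional_extensionality_dep; intro x.
  apply functional_extensionality; intro a.
  apply sig_eq; simpl.
  rewrite <- comp_assoc, <- tens_comp_law, comp_idl, comp_assoc; reflexivity.
Defined.

Lemma lres_transpose_inj (y : WpOb t W) (β1 β2 : Qplus_ob hL' y) :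
  lres_transpose β1 = lres_transpose β2 -> β1 = β2.
Proof.
  intro Heq.
  apply (f_equal (fun θ : Lres_ob p (Qplus hP) (Qplus hR) y =>
    proj1_sig (proj1_sig θ _ (Qplus_rep_elem hP)))) in Heq.
  simpl in Heq.
  apply (pullback_cancel L'_pullback), (lres_cancel L_lres Heq).
Qed.

Hypothesis t_logical : logical t.

Lemma lres_transpose_surj (y : WpOb t W) (θ : Lres_ob p (Qplus hP) (Qplus hR) y) :
  exists β, lres_transpose β = θ.
Proof.
  destruct (proj1_sig θ _ (Qplus_rep_elem hP)) as [b b_over] eqn:Hθ.
  destruct (L_lres b) as [g [g_curries _]].
  assert (g_over : fmap t g = comp (projT2 y) lp).
  { apply (lres_cancel (proj1 t_logical P R L ev L_lres)).
    transitivity (cast (fob_tens t P (projT1 y)) eq_refl (fmap t b)).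
    - rewrite <- (fmap_id t P), <- fmap_tens, cast_comp, <- fmap_comp, g_curries.
      reflexivity.
    - symmetry; eapply lres_curry_transport; [exact b_over | exact lp_curries_p]. }
  destruct (L'_pullback (exist _ g g_over : deriv t _ L eq_refl eq_refl _))
    as [β [Hβ _]].
  exists β; apply Lres_ob_eq_rep; rewrite Hθ; apply sig_eq; simpl.
  simpl in Hβ; rewrite Hβ; exact g_curries.
Qed.

Lemma Qplus_lres_iso : psh_iso (Qplus hL') (Lres p (Qplus hP) (Qplus hR)).
Proof.
  apply (psh_iso_of_bijective (φ := lres_transposeH)).
  - exact lres_transpose_inj.
  - exact lres_transpose_surj.
Qed.
End LeftResidual.

Section RightResidual.
Variables (D T : MonCat) (t : StrictMonFunctor D T) (W : T) (p : Hom (tens W W) W).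
Variables (Q R : D) (hQ : fob t Q = W) (hR : fob t R = W).
Variables (L : D) (ev : Hom (tens L Q) R) (rp : Hom W (fob t L)).
Hypothesis L_rres : is_rres Q R L ev.
Hypothesis rp_curries_p : comp (tensH rp (idm W)) (rres_ev_T hQ hR ev) = p.
Variables (L' : D) (hL' : fob t L' = W) (lam : deriv t L' L hL' eq_refl rp).
Hypothesis L'_pullback : is_pullback t rp L eq_refl L' hL' lam.

Definition rres_transpose_at (x : WpOb t W) (β : Qplus_ob hL' x)
  (y : WpOb t W) (a : Qplus_ob hQ y) : Qplus_ob hR (Wp_tens p x y).
Proof.
  exists (comp (tensH (proj1_sig (deriv_comp β lam)) (proj1_sig a)) ev).
  rewrite fmap_comp; unfold Wp_tens; simpl.
  eapply rres_eval_transport.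
  - apply fmap_tens.
  - exact (proj2_sig a).
  - exact (proj2_sig (deriv_comp β lam)).
  - exact rp_curries_p.
Defined.

Definition rres_transpose (x : WpOb t W) (β : Qplus_ob hL' x) :
  Rres_ob p (Qplus hQ) (Qplus hR) x.
Proof.
  exists (rres_transpose_at β).
  intros y' y h a; apply sig_eq; simpl.
  rewrite <- comp_assoc, <- tens_comp_law, comp_idl; reflexivity.
Defined.

Definition rres_transposeH : PshHom (Qplus hL') (Rres p (Qplus hQ) (Qplus hR)).
Proof.
  exists rres_transpose.
  intros x' x h β; apply sig_eq; simpl.
  apply functional_extensionality_dep; intro y.
  apply functional_extensionality; intro a.
  apply sig_eq; simpl.
  rewrite <- comp_assoc, <- tens_comp_law, comp_idl, comp_assoc; reflexivity.
Defined.

Lemma rres_transpose_inj (x : WpOb t W) (β1 β2 : Qplus_ob hL' x) :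
  rres_transpose β1 = rres_transpose β2 -> β1 = β2.
Proof.
  intro Heq.
  apply (f_equal (fun θ : Rres_ob p (Qplus hQ) (Qplus hR) x =>
    proj1_sig (proj1_sig θ _ (Qplus_rep_elem hQ)))) in Heq.
  simpl in Heq.
  apply (pullback_cancel L'_pullback), (rres_cancel L_rres Heq).
Qed.

Hypothesis t_logical : logical t.

Lemma rres_transpose_surj (x : WpOb t W) (θ : Rres_ob p (Qplus hQ) (Qplus hR) x) :
  exists β, rres_transpose β = θ.
Proof.
  destruct (proj1_sig θ _ (Qplus_rep_elem hQ)) as [b b_over] eqn:Hθ.
  destruct (L_rres b) as [g [g_curries _]].
  assert (g_over : fmap t g = comp (projT2 x) rp).
  { apply (rres_cancel (proj2 t_logical Q R L ev L_rres)).
    transitivity (cast (fob_tens t (projT1 x) Q) eq_refl (fmap t b)).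
    - rewrite <- (fmap_id t Q), <- fmap_tens, cast_comp, <- fmap_comp, g_curries.
      reflexivity.
    - symmetry; eapply rres_curry_transport; [exact b_over | exact rp_curries_p]. }
  destruct (L'_pullback (exist _ g g_over : deriv t _ L eq_refl eq_refl _))
    as [β [Hβ _]].
  exists β; apply Rres_ob_eq_rep; rewrite Hθ; apply sig_eq; simpl.
  simpl in Hβ; rewrite Hβ; exact g_curries.
Qed.

Lemma Qplus_rres_iso : psh_iso (Qplus hL') (Rres p (Qplus hQ) (Qplus hR)).
Proof.
  apply (psh_iso_of_bijective (φ := rres_transposeH)).
  - exact rres_transpose_inj.
  - exact rres_transpose_surj.
Qed.
End RightResidual.

Theorem proposition3p23 (D T : MonCat) (t : StrictMonFunctor D T)
  (Hlog : logical t) (W : T) (p : Hom (tens W W) W) (e : Hom (munit T) W)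
  (Hmon : is_monoid p e) (Henough : enough_res_pb t p) :
  (forall (P R : D) (hP : fob t P = W) (hR : fob t R = W)
          (L : D) (ev : Hom (tens P L) R), is_lres P R L ev ->
   forall lp : Hom W (fob t L),
     comp (tensH (idm W) lp) (lres_ev_T hP hR ev) = p ->
   forall (L' : D) (hL' : fob t L' = W) (lam : deriv t L' L hL' eq_refl lp),
     is_pullback t lp L eq_refl L' hL' lam ->
     psh_iso (Qplus hL') (Lres p (Qplus hP) (Qplus hR))) /\
  (forall (Q R : D) (hQ : fob t Q = W) (hR : fob t R = W)
          (L : D) (ev : Hom (tens L Q) R), is_rres Q R L ev ->
   forall rp : Hom W (fob t L),
     comp (tensH rp (idm W)) (rres_ev_T hQ hR ev) = p ->
   forall (L' : D) (hL' : fob t L' = W) (lam : deriv t L' L hL' eq_refl rp),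
     is_pullback t rp L eq_refl L' hL' lam ->
     psh_iso (Qplus hL') (Rres p (Qplus hQ) (Qplus hR))).
Proof.
  split.
  - intros P R hP hR L ev Hres lp Hlp L' hL' lam Hpb.
    exact (Qplus_lres_iso Hres Hlp Hpb Hlog).
  - intros Q R hQ hR L ev Hres rp Hrp L' hL' lam Hpb.
    exact (Qplus_rres_iso Hres Hrp Hpb Hlog).
Qed.
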